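(* Let $T=\{\!\{T_1,\dots,T_m\}\!\}$ where each $T_j$ is a $G_j$-join tree with $G_j$ a finite subgraph of $\mathsf{Path}_{\mathbb Z}$. Then for every shift permutation $\sigma$ of $[m]$ and every $h\in[m]$: (i) $\Psi(T)\ge\Psi(T_{\sigma(1)})+\vec\Delta(G_{\sigma(2)},\dots,G_{\sigma(m)}\mid G_{\sigma(1)})$; (ii) $\Psi(T)\ge\Psi(T_{\sigma(h)})+\vec\Delta(G_{\sigma(h+1)},\dots,G_{\sigma(m)}\mid G_{\sigma(1)}\cup\dots\cup G_{\sigma(h)})$; (iii) $\Psi(T)\ge\Psi(T_j\ominus F_j)-\Delta(G_j\ominus F_j)+\vec\Delta(G_{\tilde\sigma_j(1)},\dots,G_{\tilde\sigma_j(m)})$, where $j:=\sigma(h)$ and $F_j:=G_{\sigma(1)}\cup\dots\cup G_{\sigma(h-1)}$.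
   Context: Graphs are finite simple graphs without isolated vertices; $\emptyset$ is the empty graph. $\mathsf{Path}_{\mathbb Z}$ has vertex set $\mathbb Z$ and edges $\{i-1,i\}$. $\Delta(G)$ = number of connected components; $G\ominus F$ = union of components of $G$ sharing no vertex with $F$; $\vec\Delta(H_1,\dots,H_r\mid F)=\sum_{l=1}^r\Delta(H_l\ominus(F\cup H_1\cup\dots\cup H_{l-1}))$ and $\vec\Delta(H_1,\dots,H_r)=\vec\Delta(H_1,\dots,H_r\mid\emptyset)$. Join trees: for finite $G\subset\mathsf{Path}_{\mathbb Z}$, a $G$-join tree is a finite rooted binary tree (each non-leaf has an ordered left and right child) with nodes labeled by subgraphs of $G$: leaves by single-edge subgraphs of $G$ or $\emptyset$, each non-leaf by the union of its children's labels, the root by $G$. $T_1\cup T_2$ is the join tree with a new root whose left subtree is $T_1$ and right subtree $T_2$. $\{\!\{T_1\}\!\}=T_1$ and $\{\!\{T_1,\dots,T_m\}\!\}=\{\!\{T_1,\dots,T_{m-1}\}\!\}\cup\{\!\{T_1,\dots,T_{m-2},T_m\}\!\}$ for $m\ge2$. For a $G$-join tree $S$ and a graph $F$, $S\ominus F$ is the $(G\ominus F)$-join tree obtained from $S$ by relabeling to $\emptyset$ every leaf whose label is an edge not in $G\ominus F$ (and relabeling each non-leaf by the union of its children's labels). Branch coverings and $\Psi$: for a $G$-join tree $S$ and a root-to-leaf path $b_1,\dots,b_\ell$, let $B_j$ ($j<\ell$) be the label of the child of $b_j$ other than $b_{j+1}$, and $B_\ell$ the label of leaf $b_\ell$; $\{B_1,\dots,B_\ell\}$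 is an $S$-branch covering. $\Psi(S)$ is the maximum of $\vec\Delta(C_1,\dots,C_r)$ over all $S$-branch coverings $\mathcal C$ and all enumerations $C_1,\dots,C_r$ (without repetition) of $\mathcal C$. Shift permutations: a permutation $\sigma$ of $[m]$ with $\sigma(j)\ge j-1$ for all $j$. For $I\subseteq[m]$ with $m\in I$, $I=\{i_1<\dots<i_p\}$, $i_0:=0$, let $\sigma_I(j)=i_h$ if $j=i_{h-1}+1$ for some $h$, and $\sigma_I(j)=j-1$ otherwise; every shift permutation equals $\sigma_I$ for exactly one such $I$. For $\sigma=\sigma_I$ and $j\in[m]$, $\tilde\sigma_j:=\sigma_{\tilde I_j}$ with $\tilde I_j=I\cup[i_{h-1}]$ if $j=i_h\in I$ and $\tilde I_j=I\cup[j-1]$ if $j\notin I$. *)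

From mathcomp Require Import all_boot all_order all_algebra.
From mathcomp Require Import finmap.
Set Implicit Arguments. Unset Strict Implicit. Unset Printing Implicit Defensive.
Import GRing.Theory Num.Theory.
Local Open Scope fset_scope.

(* A finite subgraph of Path_Z (without isolated vertices) is represented by
   its finite set of edges; the integer i stands for the edge {i-1, i}. *)
Definition graph := {fset int}.

Definition vert (G : graph) : {fset int} := G `|` [fset (i - 1)%R | i in G].

Definition segment (e f : int) : seq int :=
  [seq (Order.min e f + k%:Z)%R | k <- iota 0 (`|(f - e)%R|%N).+1].

(* two edges e, f of G are in the same connected component of G iff every
   edge between them belongs to G (consecutive edges i, i+1 share vertex i) *)
Definition conn (G : graph) (e f : int) : bool := all (fun k => k \in G) (segment e f).

Definition comp (G : graph) (e : int) : graph := [fset f in G | conn G e f].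

Definition components (G : graph) : {fset graph} := [fset comp G e | e in G].

Definition Delta (G : graph) : nat := #|` components G|.

Definition ominus (G F : graph) : graph :=
  [fset e in G | vert (comp G e) `&` vert F == fset0].

Fixpoint vDeltaC (F : graph) (s : seq graph) : nat :=
  match s with
  | [::] => 0
  | H :: s' => Delta (ominus H F) + vDeltaC (F `|` H) s'
  end.
Definition vDelta (s : seq graph) : nat := vDeltaC fset0 s.

Definition unionG (s : seq graph) : graph := foldr fsetU fset0 s.

(* join trees: leaves carry an edge (Some i) or the empty graph (None);
   labels of non-leaves are unions of children's labels (computed). *)
Inductive jtree := Leaf of option int | Node of jtree & jtree.

Fixpoint jlabel (S : jtree) : graph :=
  match S with
  | Leaf (Some i) => [fset i]
  | Leaf None => fset0
  | Node l r => jlabel l `|` jlabel r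
  end.
(* S is a G-join tree iff jlabel S = G. *)

(* {{T_1,...,T_m}} (fuel = length of the list) *)
Fixpoint multi_fuel (n : nat) (s : seq jtree) : jtree :=
  match n with
  | 0 => Leaf None
  | n'.+1 =>
    match s with
    | [::] => Leaf None
    | [:: t] => t
    | _ => Node (multi_fuel n' (take (size s).-1 s))
                (multi_fuel n' (rcons (take (size s).-2 s) (last (Leaf None) s)))
    end
  end.
Definition multi (s : seq jtree) : jtree := multi_fuel (size s) s.

Fixpoint jrelab (H : graph) (S : jtree) : jtree :=
  match S with
  | Leaf (Some i) => if i \in H then Leaf (Some i) else Leaf None
  | Leaf None => Leaf None
  | Node l r => Node (jrelab H l) (jrelab H r)
  end.
Definition jominus (S : jtree) (F : graph) : jtree := jrelab (ominus (jlabel S) F) S.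

Fixpoint branch_covs (S : jtree) : seq (seq graph) :=
  match S with
  | Leaf o => [:: [:: jlabel (Leaf o)]]
  | Node l r => [seq jlabel r :: c | c <- branch_covs l]
                ++ [seq jlabel l :: c | c <- branch_covs r]
  end.

(* Psi(S): max over coverings (as sets: undup) and their enumerations
   without repetition (permutations of the duplicate-free list) *)
Definition Psi (S : jtree) : nat :=
  \max_(c <- branch_covs S) \max_(p <- permutations (undup c)) vDelta p.

(* shift permutations of [m] = {1..m}, as functions nat -> nat *)
Definition shift_perm (m : nat) (sigma : nat -> nat) : Prop :=
  [/\ (forall j, 1 <= j <= m -> 1 <= sigma j <= m)%N,
      {in [pred j | 1 <= j <= m]%N &, injective sigma} &
      (forall j, 1 <= j <= m -> j.-1 <= sigma j)%N].

(* I subset of [m] with m in I (as a list, read as a set) *)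
Definition valid_I (m : nat) (I : seq nat) : bool :=
  all (fun i => 1 <= i <= m)%N I && (m \in I).

(* sigma_I(j) = i_h if j = i_{h-1}+1 (i_0 = 0), else j-1 *)
Definition sigmaI (I : seq nat) (j : nat) : nat :=
  if (j.-1 == 0)%N || (j.-1 \in I)
  then \big[minn/foldr maxn 0 I]_(i <- I | (j <= i)%N) i
  else j.-1.

Definition prevI (I : seq nat) (j : nat) : nat := \big[maxn/0]_(i <- I | (i < j)%N) i.

Definition Itilde (I : seq nat) (j : nat) : seq nat :=
  if j \in I then I ++ iota 1 (prevI I j) else I ++ iota 1 j.-1.

(* Write M n x := {{T_1, ..., T_(n-1), T_x}} (= [multi_pre T n x]), so that
   M (n+1) x has the children M n n and M n x, and T = M m m.  For sigma = sigma_I,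
   going down from the root through M n (nextI I n) for n >= h and then through
   M n (sigma h) for n < h reaches the subtree T_(sigma h); the siblings met on the
   way are M n (sigma (n+1)) above h and M n (tau n) below h, where
   tau = tilde(sigma)_(sigma h).  So every T_(sigma h)-branch covering extends to a
   T-branch covering by these siblings.  The label of M n x is
   G_1 u ... u G_(n-1) u G_x, and when the siblings are enumerated in the order of
   sigma (resp. tau), the part G_1 u ... u G_(n-1) is already covered and does not
   change vDelta.  Enumerating an optimal covering of T_(sigma h) first and the
   siblings above h last gives (ii), hence (i).  For (iii) the siblings below h come
   first, followed by a T_(sigma h)-covering whose restriction to G_(sigma h) (-) F
   is optimal for T_(sigma h) (-) F: restricting an enumeration to G_(sigma h) (-) F
   can only lower its vDelta in context F. *)

From mathcomp Require Import all_boot all_order all_algebra finmap zify.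
Set Implicit Arguments. Unset Strict Implicit. Unset Printing Implicit Defensive.
Import Order.TTheory GRing.Theory Num.Theory.

(** * Shift permutations *)

Definition nextI (I : seq nat) (k : nat) : nat :=
  \big[minn/foldr maxn 0 I]_(i <- I | (k <= i)%N) i.

Lemma sigmaIE I k :
  sigmaI I k = if (k.-1 == 0)%N || (k.-1 \in I) then nextI I k else k.-1.
Proof. by []. Qed.

Lemma big_minn_eq (r : seq nat) (P : pred nat) d y :
  y \in r -> P y -> (y <= d)%N -> {in r, forall i, P i -> y <= i}%N ->
  \big[minn/d]_(i <- r | P i) i = y.
Proof.
move=> ry Py yd ymin; apply/eqP; rewrite eqn_leq; apply/andP; split.
  elim: r ry {ymin} => // a r IH; rewrite big_cons inE.
  case/predU1P => [<-|ry]; first by rewrite Py geq_minl.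
  by case: ifP => _; rewrite ?ssrnat.geq_min IH ?orbT.
rewrite big_seq_cond; elim/big_ind: _ => // [a b|i /andP[]].
  by rewrite leq_min => ->.
exact: ymin.
Qed.

Lemma nextI_min I k y : y \in I -> (k <= y)%N ->
  {in I, forall i, k <= i -> y <= i}%N -> nextI I k = y.
Proof.
move=> Iy ky ymin; apply: big_minn_eq => //.
by rewrite foldrE; apply: leq_bigmax_seq.
Qed.

Lemma prevI_pred I k : (0 < k)%N -> (k.-1 == 0)%N || (k.-1 \in I) ->
  prevI I k = k.-1.
Proof.
move=> k0 Ik; apply/eqP; rewrite eqn_leq; apply/andP; split.
  by apply/bigmax_leqP_seq => i _ ik; rewrite -ltnS prednK.
case/orP: Ik => [/eqP -> //|Ik].
by apply: leq_bigmax_seq Ik _; rewrite prednK.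
Qed.

Section NextI.
Variables (m : nat) (I : seq nat).
Hypothesis HI : valid_I m I.

Lemma valid_I_mem i : i \in I -> (0 < i <= m)%N.
Proof. by case/andP: HI => /allP H _ /H. Qed.

Lemma valid_I_top : m \in I.
Proof. by case/andP: HI. Qed.

Lemma nextI_spec k : (k <= m)%N ->
  [/\ nextI I k \in I, k <= nextI I k & {in I, forall i, k <= i -> nextI I k <= i}]%N.
Proof.
move=> km; have ex : exists y, (y \in I) && (k <= y)%N.
  by exists m; rewrite valid_I_top.
case: (ex_minnP ex) => y /andP[Iy ky] ymin.
have ymin' : {in I, forall i, k <= i -> y <= i}%N.
  by move=> i Ii ki; apply: ymin; rewrite Ii.
by rewrite (nextI_min Iy ky ymin').
Qed.

Lemma nextI_top : nextI I m = m.
Proof. exact: nextI_min valid_I_top (leqnn m) _. Qed.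

Lemma nextI_S n : (n < m)%N -> nextI I n = if n \in I then n else nextI I n.+1.
Proof.
move=> nm; case: ifP => In; first exact: nextI_min.
have [Inext nnext nmin] := nextI_spec nm.
apply: nextI_min Inext (ltnW nnext) _ => i Ii ni.
apply: nmin => //; rewrite ltn_neqAle ni andbT.
by apply: contraFneq In => ->.
Qed.

Lemma sigmaI_range k : (0 < k <= m)%N -> (0 < sigmaI I k <= m)%N.
Proof.
move=> km; rewrite sigmaIE; case: ifPn => [_|]; last lia.
by have [/valid_I_mem] := nextI_spec (k := k) ltac:(lia).
Qed.

Lemma prevI_nextI k : (k <= m)%N -> prevI I (nextI I k) = prevI I k.
Proof.
move=> km; have [_ knext nmin] := nextI_spec km.
rewrite /prevI big_seq_cond [RHS]big_seq_cond; apply: eq_bigl => i.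
case Ii: (i \in I) => //=; apply/idP/idP => [inext|ik].
  by rewrite ltnNge; apply: contraTN inext => /(nmin _ Ii); rewrite leqNgt.
exact: leq_trans ik knext.
Qed.

Lemma Itilde_sigmaI h : (0 < h <= m)%N ->
  Itilde I (sigmaI I h) = I ++ iota 1 (if h.-1 \in I then h.-1 else h.-2).
Proof.
case/andP=> h0 hm; have [Inext _ _] := nextI_spec hm.
rewrite /Itilde sigmaIE.
case: (boolP (_ || _)) => [h1|/norP[_ /negbTE hI]]; last by rewrite hI.
rewrite Inext prevI_nextI // prevI_pred //.
by case: ifP h1 => //= _; rewrite orbF => /eqP ->.
Qed.

Section CatIota.
Variable p : nat.
Hypothesis pm : (p < m)%N.

Lemma valid_I_cat_iota : valid_I m (I ++ iota 1 p).
Proof.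
rewrite /valid_I all_cat mem_cat valid_I_top andbT; apply/andP; split.
  by apply/allP => i /valid_I_mem.
by apply/allP => i; rewrite mem_iota; lia.
Qed.

Lemma nextI_cat_iota k : (0 < k <= m)%N ->
  nextI (I ++ iota 1 p) k = if (k <= p)%N then k else nextI I k.
Proof.
move=> km; case: ifP => kp.
  by apply: nextI_min => //; rewrite mem_cat mem_iota; lia.
have [Inext knext nmin] := nextI_spec (k := k) ltac:(lia).
apply: nextI_min => [|//|i]; first by rewrite mem_cat Inext.
by rewrite mem_cat mem_iota => /orP[/nmin //|]; lia.
Qed.

Lemma sigmaI_cat_iota_low k : (0 < k <= p)%N -> sigmaI (I ++ iota 1 p) k = k.
Proof.
move=> kp; rewrite sigmaIE nextI_cat_iota; last lia.
case/andP: (kp) => _ ->.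
case: k kp => [|[|k]] // kp; rewrite ifT // mem_cat mem_iota; apply/orP; right; lia.
Qed.

Lemma sigmaI_cat_iota_high k : (p < k <= m)%N ->
  sigmaI (I ++ iota 1 p) k = if k == p.+1 then nextI I k else sigmaI I k.
Proof.
move=> kp; rewrite !sigmaIE nextI_cat_iota; last lia.
rewrite leqNgt; case/andP: (kp) => -> _ /=.
rewrite mem_cat mem_iota; case: eqP => [_|k1] /=; first by case: ifP.
case: eqP => [kp1|kp1]; first by rewrite ifT //; apply/orP; right; lia.
by rewrite (_ : (0 < k.-1 < 1 + p) = false) ?orbF //; lia.
Qed.

End CatIota.

End NextI.

(** * Components of subgraphs of Path_Z *)

Local Open Scope fset_scope.

Definition adj (a b : int) : bool := ((a - 1 <= b) && (b <= a + 1))%R.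

Lemma adjxx a : adj a a.
Proof. rewrite /adj; lia. Qed.

Lemma in_vert (X : graph) v : (v \in vert X) = (v \in X) || ((v + 1)%R \in X).
Proof.
rewrite /vert in_fsetU; congr (_ || _); apply/imfsetP/idP => [[i Xi ->]|X1].
  by rewrite subrK.
by exists (v + 1)%R; rewrite ?addrK.
Qed.

Lemma vert_disjointP (X Y : graph) :
  reflect (forall a b, a \in X -> b \in Y -> ~~ adj a b) (vert X `&` vert Y == fset0).
Proof.
apply: (iffP eqP) => [XY a b Xa Yb|XY].
  have noV v : v \in vert X -> v \in vert Y -> False.
    by move=> Xv Yv; have := in_fset0 v; rewrite -XY in_fsetI Xv Yv.
  apply/negP; rewrite /adj => ab.
  have [ba|[ba|ba]] : b = a \/ (b = a + 1)%R \/ (b = a - 1)%R by lia.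
  - by apply: (noV a); rewrite in_vert ?Xa -?ba ?Yb.
  - by apply: (noV a); rewrite in_vert -?ba ?Xa ?Yb ?orbT.
  - by apply: (noV b); rewrite in_vert ba subrK ?Xa -?ba ?Yb ?orbT.
apply/fsetP => v; rewrite in_fset0 in_fsetI !in_vert.
case Xv: (v \in X); case Xv1: ((v + 1)%R \in X);
  case Yv: (v \in Y); case Yv1: ((v + 1)%R \in Y) => //=.
all: first [ have := XY _ _ Xv Yv | have := XY _ _ Xv Yv1
           | have := XY _ _ Xv1 Yv | have := XY _ _ Xv1 Yv1 ]; rewrite /adj; lia.
Qed.

Definition betw (e f k : int) : bool :=
  ((Order.min e f <= k) && (k <= Order.max e f))%R.

Lemma mem_segment e f k : (k \in segment e f) = betw e f k.
Proof.
rewrite /segment /betw; apply/mapP/idP => [[n]|ekf].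
  by rewrite mem_iota => /andP[_ n_lt] ->; lia.
by exists `|k - Order.min e f|%N; [rewrite mem_iota|]; lia.
Qed.

Lemma connP (G : graph) e f : reflect (forall k, betw e f k -> k \in G) (conn G e f).
Proof. by apply: (iffP allP) => efG k; have := efG k; rewrite mem_segment. Qed.

Lemma conn_sym (G : graph) e f : conn G e f = conn G f e.
Proof. by apply/connP/connP => efG k kfe; apply: efG; move: kfe; rewrite /betw; lia. Qed.

Lemma conn_trans (G : graph) f e g : conn G e f -> conn G f g -> conn G e g.
Proof.
move=> /connP efG /connP fgG; apply/connP => k.
rewrite /betw => ekg.
by have [/efG|/fgG] : betw e f k \/ betw f g k by rewrite /betw; lia.
Qed.

Lemma connxx (G : graph) e : e \in G -> conn G e e.
Proof. by move=> Ge; apply/connP => k; rewrite /betw => ekk; have -> : k = e by lia. Qed.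

Lemma conn_subset (G G' : graph) e f : G `<=` G' -> conn G e f -> conn G' e f.
Proof. by move=> /fsubsetP GG' /connP efG; apply/connP => k /efG /GG'. Qed.

Lemma conn_memr (G : graph) e f : conn G e f -> f \in G.
Proof. by move=> /connP; apply; rewrite /betw; lia. Qed.

Lemma conn_adj (G : graph) e f : e \in G -> f \in G -> adj e f -> conn G e f.
Proof.
move=> Ge Gf ef; apply/connP => k; rewrite /betw => efk.
by have [->|->] : k = e \/ k = f by move: ef; rewrite /adj; lia.
Qed.

Lemma betw_ind (P : int -> Prop) e f : P e ->
  (forall k, betw e f k -> k != e ->
     P (if (e <= k)%R then k - 1 else k + 1)%R -> P k) ->
  forall k, betw e f k -> P k.
Proof.
move=> Pe Pstep; suff Pn n k : `|(k - e)%R|%N = n -> betw e f k -> P k.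
  by move=> k; apply: Pn.
elim: n k => [|n IHn] k kn efk; first by have -> : k = e by lia.
have ke : k != e by apply/eqP => ke; rewrite ke subrr in kn.
apply: Pstep => //; apply: IHn; case: ifP => ek; move: efk; rewrite /betw; lia.
Qed.

Lemma adj_step e k : adj (if (e <= k)%R then k - 1 else k + 1)%R k.
Proof. by rewrite /adj; case: ifP => _; lia. Qed.

Lemma mem_comp (G : graph) e f : (f \in comp G e) = conn G e f.
Proof.
rewrite /comp !inE /=; apply/andP/idP => [[]//|efG]; split => //.
exact: conn_memr efG.
Qed.

Lemma comp_conn (G : graph) e f : conn G e f -> comp G f = comp G e.
Proof.
move=> efG; apply/fsetP => g; rewrite !mem_comp; apply/idP/idP.
  exact: conn_trans.
by apply: conn_trans; rewrite conn_sym.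
Qed.

Lemma mem_ominus (G F : graph) e :
  (e \in ominus G F) = (e \in G) && (vert (comp G e) `&` vert F == fset0).
Proof. by rewrite /ominus !inE. Qed.

Lemma ominus_subset (G F : graph) : ominus G F `<=` G.
Proof. by apply/fsubsetP => e; rewrite mem_ominus => /andP[]. Qed.

Lemma ominus_conn (G F : graph) e f :
  e \in ominus G F -> conn G e f -> f \in ominus G F.
Proof.
rewrite !mem_ominus => /andP[_ eF] efG.
by rewrite (comp_conn efG) eF (conn_memr efG).
Qed.

Lemma ominus_notin (G F : graph) e : e \in ominus G F -> e \notin F.
Proof.
rewrite mem_ominus => /andP[Ge /vert_disjointP GF]; apply/negP => /(GF e e).
by rewrite mem_comp connxx // adjxx => /(_ isT).
Qed.

Lemma ominus_subset0 (X F : graph) : X `<=` F -> ominus X F = fset0.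
Proof.
move=> /fsubsetP XF; apply/fsetP => e; rewrite in_fset0.
apply/negP => Xe; have := ominus_notin Xe.
by rewrite XF // (fsubsetP (ominus_subset X F)).
Qed.

Lemma Delta0 : Delta fset0 = 0%N.
Proof.
rewrite /Delta /components (_ : [fset _ | e in _] = fset0) ?cardfs0 //.
by apply/fsetP => x; rewrite in_fset0; apply/imfsetP => -[e]; rewrite inE.
Qed.

(* Walking from [e] to [f], the first edge outside [H] would be an edge of [F]
   adjacent to the component of [e] in [H]. *)
Lemma conn_ominus_pad (H H' F : graph) e f :
  H' `<=` H `|` F -> e \in ominus H F -> conn H' e f -> conn H e f.
Proof.
move=> /fsubsetP H'HF eHF /connP efH'.
move: (eHF); rewrite mem_ominus => /andP[He /vert_disjointP eF].
suff: forall k, betw e f k -> conn H e k by apply; rewrite /betw; lia.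
apply: betw_ind; first exact: connxx.
move=> k efk ke ek'; move: (H'HF _ (efH' _ efk)); rewrite in_fsetU => /orP[Hk|Fk].
  exact: conn_trans ek' (conn_adj (conn_memr ek') Hk (adj_step e k)).
by rewrite -mem_comp in ek'; have := eF _ k ek' Fk; rewrite adj_step.
Qed.

Lemma ominus_pad (H H' F : graph) :
  H `<=` H' -> H' `<=` H `|` F -> ominus H' F = ominus H F.
Proof.
move=> HH' H'HF; apply/fsetP => e; apply/idP/idP => eF.
  have := ominus_notin eF; move: eF.
  rewrite !mem_ominus => /andP[H'e /vert_disjointP eF] Fe.
  have He : e \in H by move: (fsubsetP H'HF e H'e); rewrite in_fsetU (negbTE Fe) orbF.
  rewrite He; apply/vert_disjointP => a b; rewrite mem_comp => /(conn_subset HH') ea.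
  by apply: eF; rewrite mem_comp.
have := eF; rewrite !mem_ominus => /andP[He /vert_disjointP eF'].
rewrite (fsubsetP HH' e He); apply/vert_disjointP => a b; rewrite mem_comp => ea.
by apply: eF'; rewrite mem_comp (conn_ominus_pad H'HF eF ea).
Qed.

Lemma leq_Delta_closed (X Y : graph) : X `<=` Y ->
  (forall e f, e \in X -> conn Y e f -> f \in X) -> (Delta X <= Delta Y)%N.
Proof.
move=> /fsubsetP XY Xclosed; apply: fsubset_leq_card.
apply/fsubsetP => C /imfsetP [e /= Xe ->]; apply/imfsetP; exists e; first exact: XY.
apply/fsetP => f; rewrite !mem_comp; apply/idP/idP; first exact/conn_subset/fsubsetP.
move=> efY; apply/connP => k ekf; apply: (Xclosed e) => //.
apply/connP => k' ekk'; move/connP: efY; apply; move: ekf ekk'; rewrite /betw; lia.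
Qed.

(* Every component of the left-hand graph is a component of [B (-) (F `|` A)]. *)
Lemma leq_Delta_ominus_restrict (G F A B : graph) : A `<=` G -> B `<=` G ->
  (Delta (ominus (B `&` ominus G F) (A `&` ominus G F)) <= Delta (ominus B (F `|` A)))%N.
Proof.
move=> /fsubsetP AG /fsubsetP BG; set H := ominus G F.
have connBH e f : e \in H -> conn B e f -> conn (B `&` H) e f.
  move=> He efB; apply/connP => k efk; rewrite in_fsetI (connP _ _ _ efB) //=.
  apply: (ominus_conn He); apply/connP => k' ekk'; apply/BG/(connP _ _ _ efB).
  by move: efk ekk'; rewrite /betw; lia.
apply: leq_Delta_closed => [|e f]; last first.
  move=> eX efY; have eH : e \in H.
    by move: eX; rewrite mem_ominus in_fsetI => /andP[/andP[]].
  by apply: (ominus_conn eX); apply/connBH/(conn_subset (ominus_subset B _) efY).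
apply/fsubsetP => e.
rewrite !mem_ominus in_fsetI => /andP[/andP[Be He] /vert_disjointP eX].
rewrite Be; apply/vert_disjointP => a b; rewrite mem_comp => eaB.
have Ha : a \in H by apply: (ominus_conn He); apply: conn_subset eaB; apply/fsubsetP.
rewrite in_fsetU => /orP[Fb|Ab].
  move: (Ha); rewrite mem_ominus => /andP[Ga /vert_disjointP aF].
  by apply: aF Fb; rewrite mem_comp connxx.
apply/negP => ab; have Hb : b \in H.
  apply: (ominus_conn Ha); apply: conn_adj ab; [exact/BG/(conn_memr eaB)|exact/AG].
have := eX a b; rewrite mem_comp in_fsetI Ab Hb connBH // => /(_ isT isT).
by rewrite ab.
Qed.

(** * Enumerations and Psi *)

Lemma in_unionG e s : (e \in unionG s) = has (fun X : graph => e \in X) s.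
Proof. by elim: s => [|X s IHs] /=; rewrite ?in_fset0 // in_fsetU IHs. Qed.

Lemma unionG_cat s t : unionG (s ++ t) = unionG s `|` unionG t.
Proof. by elim: s => [|X s IHs] /=; rewrite ?fset0U // IHs fsetUA. Qed.

Lemma unionG_rcons s X : unionG (rcons s X) = unionG s `|` X.
Proof. by rewrite -cats1 unionG_cat /= fsetU0. Qed.

Lemma fsubset_unionG (X : graph) s : X \in s -> X `<=` unionG s.
Proof. by move=> sX; apply/fsubsetP => e Xe; rewrite in_unionG; apply/hasP; exists X. Qed.

Lemma unionG_subset s t : {subset s <= t} -> unionG s `<=` unionG t.
Proof.
move=> st; apply/fsubsetP => e; rewrite !in_unionG => /hasP[X sX Xe].
by apply/hasP; exists X; first exact: st.
Qed.

Lemma vDeltaC_cat F s t :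
  vDeltaC F (s ++ t) = (vDeltaC F s + vDeltaC (F `|` unionG s) t)%N.
Proof. by elim: s F => [|X s IHs] F /=; rewrite ?fsetU0 // IHs addnA fsetUA. Qed.

Lemma vDeltaC_filter F (P : pred graph) s :
  (forall X, X \in s -> ~~ P X -> X `<=` F) -> vDeltaC F (filter P s) = vDeltaC F s.
Proof.
elim: s F => [|X s IHs] F //= sF; have sF' Y : Y \in s -> ~~ P Y -> Y `<=` F.
  by move=> sY; apply: sF; rewrite inE sY orbT.
case: ifPn => PX /=.
  congr (_ + _)%N; apply: IHs => Y sY PY.
  exact: fsubset_trans (sF' Y sY PY) (fsubsetUl _ _).
have XF : X `<=` F by apply: sF; rewrite ?mem_head.
by rewrite ominus_subset0 // Delta0 (fsetUidPl _ _ XF) IHs.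
Qed.

Fixpoint undup_first (s : seq graph) : seq graph :=
  if s is X :: s' then X :: [seq Y <- undup_first s' | Y != X] else [::].

Lemma mem_undup_first s : undup_first s =i s.
Proof. by elim: s => [|X s IHs] //= Y; rewrite !inE mem_filter IHs; case: eqP. Qed.

Lemma undup_first_uniq s : uniq (undup_first s).
Proof. by elim: s => [|X s IHs] //=; rewrite mem_filter eqxx filter_uniq. Qed.

Lemma vDeltaC_undup_first F s : vDeltaC F (undup_first s) = vDeltaC F s.
Proof.
elim: s F => [|X s IHs] F //=; congr (_ + _)%N.
by rewrite vDeltaC_filter ?IHs // => Y _; rewrite negbK => /eqP ->; apply: fsubsetUr.
Qed.

Definition padded (F : graph) (a n : nat) (f g : nat -> graph) : Prop :=
  forall k, (a <= k < a + n)%N ->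
    f k `<=` g k /\ g k `<=` F `|` unionG [seq f i | i <- iota a (k - a).+1].

Lemma padded_cons F a n f g : padded F a n.+1 f g ->
  [/\ f a `<=` g a, F `|` g a = F `|` f a & padded (F `|` f a) a.+1 n f g].
Proof.
move=> fg; have [fga gaF] : f a `<=` g a /\ g a `<=` F `|` f a.
  by have := fg a; rewrite subnn addnS leqnn leq_addr /= fsetU0; apply.
split=> // [|k ak]; first by apply/eqP; rewrite eqEfsubset fsubUset fsubsetUl gaF fsetUS.
have [fgk gkF] := fg k ltac:(lia); split=> //.
by move: gkF; rewrite (_ : k - a = (k - a.+1).+1)%N /= ?fsetUA //; lia.
Qed.

Lemma vDeltaC_pad F a n f g : padded F a n f g ->
  vDeltaC F [seq g k | k <- iota a n] = vDeltaC F [seq f k | k <- iota a n].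
Proof.
elim: n a F => [//|n IHn] a F /padded_cons[fga FgaE fg] /=.
have gaF : g a `<=` f a `|` F by rewrite fsetUC -FgaE fsubsetUr.
by rewrite FgaE (ominus_pad fga gaF) IHn.
Qed.

Lemma unionG_pad F a n f g : padded F a n f g ->
  F `|` unionG [seq g k | k <- iota a n] = F `|` unionG [seq f k | k <- iota a n].
Proof.
elim: n a F => [//|n IHn] a F /padded_cons[_ FgaE fg] /=.
by rewrite !fsetUA FgaE IHn.
Qed.

Lemma vDeltaC_restrict (G F A : graph) s : A `<=` G -> {in s, forall X, X `<=` G} ->
  (vDeltaC (A `&` ominus G F) [seq X `&` ominus G F | X <- s]
     <= vDeltaC (F `|` A) s)%N.
Proof.
elim: s A => [|X s IHs] A //= AG sG; have XG : X `<=` G by apply: sG; rewrite mem_head.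
apply: leq_add; first exact: leq_Delta_ominus_restrict.
rewrite -fsetIUl -fsetUA; apply: IHs; first by rewrite fsubUset AG XG.
by move=> Y sY; apply: sG; rewrite inE sY orbT.
Qed.

Lemma bigmax_seq_attained (T : eqType) (s : seq T) (f : T -> nat) :
  \max_(x <- s) f x = 0%N \/ exists2 x, x \in s & \max_(x <- s) f x = f x.
Proof.
elim: s => [|y s IHs]; first by left; rewrite big_nil.
rewrite big_cons; case: IHs => [->|[x sx ->]].
  by right; exists y; rewrite ?mem_head ?maxn0.
case: (leqP (f y) (f x)) => _; right.
  by exists x; rewrite // inE sx orbT.
by exists y; rewrite ?mem_head.
Qed.

Lemma branch_covs_neq0 S : exists c, c \in branch_covs S.
Proof.
elim: S => [o|l [c lc] r _]; first by exists [:: jlabel (Leaf o)]; rewrite mem_head.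
by exists (jlabel r :: c); rewrite mem_cat map_f.
Qed.

Lemma unionG_branch_cov S c : c \in branch_covs S -> unionG c = jlabel S.
Proof.
elim: S c => [o|l IHl r IHr] c /=; first by rewrite inE => /eqP -> /=; rewrite fsetU0.
by rewrite mem_cat => /orP[] /mapP[c' c'S ->] /=; [rewrite IHl // fsetUC | rewrite IHr].
Qed.

Lemma leq_Psi S c p : c \in branch_covs S -> {subset p <= c} -> (vDelta p <= Psi S)%N.
Proof.
move=> cS pc; set r := undup_first p ++ [seq X <- undup c | X \notin p].
have r_perm : r \in permutations (undup c).
  rewrite mem_permutations; apply: uniq_perm => [||X].
  - rewrite cat_uniq undup_first_uniq filter_uniq ?undup_uniq // andbT /=.
    by apply/hasP => -[X]; rewrite mem_filter mem_undup_first => /andP[/negbTE ->].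
  - exact: undup_uniq.
  - rewrite mem_cat mem_filter mem_undup_first mem_undup.
    by case pX: (X \in p); rewrite //= pc.
apply: (@leq_trans (vDelta r)).
  by rewrite /vDelta vDeltaC_cat vDeltaC_undup_first leq_addr.
apply: leq_trans (leq_bigmax_seq r r_perm isT) _.
exact: (leq_bigmax_seq (F := fun c => \max_(p <- permutations (undup c)) vDelta p) c cS).
Qed.

Lemma Psi_attained S : exists2 c, c \in branch_covs S &
  exists2 q, {subset q <= c} & Psi S = vDelta q.
Proof.
rewrite /Psi.
case: (bigmax_seq_attained (branch_covs S)
         (fun c => \max_(p <- permutations (undup c)) vDelta p)) => [->|[c cS ->]].
  by have [c cS] := branch_covs_neq0 S; exists c => //; exists [::].
exists c => //.
case: (bigmax_seq_attained (permutations (undup c)) vDelta) => [->|[q qc ->]].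
  by exists [::].
exists q => // X; move: qc.
by rewrite mem_permutations => /perm_mem ->; rewrite mem_undup.
Qed.

Lemma jlabel_jrelab H S : jlabel (jrelab H S) = jlabel S `&` H.
Proof.
elim: S => [[i|]|l IHl r IHr] /=; rewrite ?fset0I ?IHl ?IHr ?fsetIUl //.
by apply/fsetP => x; case: ifP => Hi; rewrite !inE; case: eqP => // ->; rewrite Hi.
Qed.

Lemma branch_covs_jrelab H S :
  branch_covs (jrelab H S) = [seq [seq X `&` H | X <- c] | c <- branch_covs S].
Proof.
elim: S => [[i|]|l IHl r IHr] /=; rewrite ?fset0I //.
  by rewrite -(jlabel_jrelab H (Leaf (Some i))) /=; case: ifP.
rewrite map_cat IHl IHr -!map_comp !jlabel_jrelab.
by congr (_ ++ _); apply: eq_map.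
Qed.

(* A covering of [S (-) F] is the restriction of a covering of [S]. *)
Lemma Psi_jominus S F : exists2 c, c \in branch_covs S &
  exists2 q, {subset q <= c} & (Psi (jominus S F) <= vDeltaC F q)%N.
Proof.
set H := ominus (jlabel S) F.
have [cH] := Psi_attained (jominus S F); rewrite /jominus -/H branch_covs_jrelab.
case/mapP => c cS -> [qH qHc ->]; exists c => //.
have [q qc ->] : exists2 q, {subset q <= c} & qH = [seq X `&` H | X <- q].
  elim: qH qHc => [|XH qH IHq] qHc; first by exists [::].
  have [|q qc ->] := IHq; first by move=> X qX; apply: qHc; rewrite inE qX orbT.
  have /mapP[X cX ->] := qHc XH (mem_head _ _).
  by exists (X :: q) => // Y; rewrite inE => /predU1P[->|/qc].
exists q => //; have := vDeltaC_restrict F (fsub0set (jlabel S)) (s := q).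
rewrite fset0I fsetU0; apply => X /qc cX.
by rewrite -(unionG_branch_cov cS) fsubset_unionG.
Qed.

(** * The join tree {{T_1, ..., T_m}} *)

Lemma iota_rcons a n : iota a n.+1 = rcons (iota a n) (a + n)%N.
Proof. by rewrite -addn1 iotaD cats1. Qed.

Lemma multi_node (s : seq jtree) : (2 <= size s)%N ->
  multi s = Node (multi (take (size s).-1 s))
                 (multi (rcons (take (size s).-2 s) (last (Leaf None) s))).
Proof.
case: s => [|a [|b s]] // _; set s2 := [:: a, b & s].
have -> : multi s2 = Node (multi_fuel (size s).+1 (take (size s).+1 s2))
    (multi_fuel (size s).+1 (rcons (take (size s) s2) (last (Leaf None) s2))) by [].
by rewrite /multi size_rcons !size_takel // ltnW.
Qed.

Section MultiPrefix.
Variable T : nat -> jtree.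

Definition multi_pre (n x : nat) : jtree := multi [seq T k | k <- rcons (iota 1 n.-1) x].

Lemma multi_pre_S n x : (0 < n)%N ->
  multi_pre n.+1 x = Node (multi_pre n n) (multi_pre n x).
Proof.
move=> n0; rewrite /multi_pre multi_node; last by rewrite size_map size_rcons size_iota.
rewrite size_map size_rcons size_iota /= !map_rcons last_rcons; congr Node.
  rewrite -cats1 take_size_cat ?size_map ?size_iota //.
  by rewrite -{1}(prednK n0) iota_rcons map_rcons add1n prednK.
rewrite -!cats1 takel_cat ?size_map ?size_iota ?leq_pred //.
by rewrite -map_take take_iota (minn_idPl (leq_pred n)).
Qed.

Lemma multi_pre_top m : (0 < m)%N -> multi [seq T k | k <- iota 1 m] = multi_pre m m.
Proof. by case: m => [|m] // _; rewrite /multi_pre iota_rcons. Qed.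

(* [multi_pre n y] is a child of [multi_pre n.+1 x] and [multi_pre n z] is its
   sibling (see [multi_pre_S]). *)
Definition child_pair (n x y z : nat) : bool :=
  ((y == n) && (z == x)) || ((y == x) && (z == n)).

Lemma child_pairC n x y z : child_pair n x y z = child_pair n x z y.
Proof. by rewrite /child_pair orbC [(y == x) && _]andbC [(y == n) && _]andbC. Qed.

Lemma branch_covs_multi_pre (y z : nat -> nat) b c :
  (forall n, (0 < n <= b)%N -> child_pair n (y n.+1) (y n) (z n)) ->
  c \in branch_covs (T (y 1%N)) ->
  rev [seq jlabel (multi_pre n (z n)) | n <- iota 1 b] ++ c
    \in branch_covs (multi_pre b.+1 (y b.+1)).
Proof.
elim: b => [//|b IHb] yz cT; have cb := IHb (fun n nb => yz n ltac:(lia)) cT.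
rewrite multi_pre_S // iota_rcons map_rcons rev_rcons add1n cat_cons /= mem_cat.
have /orP[/andP[/eqP yb /eqP ->]|/andP[/eqP yb /eqP ->]] := yz b.+1 ltac:(lia).
  by rewrite yb in cb; rewrite map_f.
by rewrite -yb map_f ?orbT.
Qed.

End MultiPrefix.

Definition G_upto (G : nat -> graph) (n : nat) : graph :=
  unionG [seq G k | k <- iota 1 n].

Lemma G_upto_S G n : G_upto G n.+1 = G_upto G n `|` G n.+1.
Proof. by rewrite /G_upto iota_rcons map_rcons unionG_rcons add1n. Qed.

Lemma G_upto_pred G n : (0 < n)%N -> G_upto G n = G_upto G n.-1 `|` G n.
Proof. by case: n => // n _; rewrite G_upto_S. Qed.

Lemma jlabel_multi_pre m (T : nat -> jtree) (G : nat -> graph) n x :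
  (forall k, (0 < k <= m)%N -> jlabel (T k) = G k) ->
  (0 < n <= m)%N -> (0 < x <= m)%N ->
  jlabel (multi_pre T n x) = G_upto G n.-1 `|` G x.
Proof.
move=> TG; elim: n x => [//|[|n] IHn] x nm xm; first by rewrite TG // fset0U.
rewrite multi_pre_S //= !IHn; try lia.
by rewrite fsetUACA fsetUid fsetUA -G_upto_S.
Qed.

Lemma G_upto_iotaD G a n :
  G_upto G a `|` unionG [seq G i | i <- iota a.+1 n] = G_upto G (a + n).
Proof. by rewrite /G_upto iotaD map_cat unionG_cat add1n. Qed.

Section ShiftedBranch.
Variables (m : nat) (T : nat -> jtree) (G : nat -> graph) (I : seq nat) (h : nat).
Hypothesis TG : forall k, (0 < k <= m)%N -> jlabel (T k) = G k.
Hypothesis HI : valid_I m I.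
Hypothesis hm : (0 < h <= m)%N.

Local Notation sigma := (sigmaI I).
Local Notation j := (sigmaI I h).
Local Notation tau := (sigmaI (Itilde I (sigmaI I h))).
Local Notation p := (if h.-1 \in I then h.-1 else h.-2).

Lemma G_upto_sigmaI k : (0 < k <= m)%N ->
  G_upto (fun i => G (sigma i)) k = G_upto G k.-1 `|` G (nextI I k).
Proof.
elim: k => [//|[|k] IHk] km; first by rewrite G_upto_S /= sigmaIE.
rewrite G_upto_S IHk; last lia.
rewrite sigmaIE /= (nextI_S HI (_ : k.+1 < m)%N) //; case: ifP => _.
  by rewrite G_upto_S.
by rewrite G_upto_S -!fsetUA [G (nextI _ _) `|` _]fsetUC.
Qed.

Lemma Itilde_sigma_h : Itilde I j = I ++ iota 1 p /\ (p < m)%N.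
Proof. by rewrite (Itilde_sigmaI HI hm); split=> //; case: ifP; lia. Qed.

Lemma tau_range k : (0 < k <= m)%N -> (0 < tau k <= m)%N.
Proof.
case: Itilde_sigma_h => -> pm; exact/sigmaI_range/valid_I_cat_iota.
Qed.

Lemma tau_low n : (0 < n <= h.-2)%N -> tau n = n.
Proof.
case: Itilde_sigma_h => -> pm nh; apply: (sigmaI_cat_iota_low HI pm).
by case: ifP; lia.
Qed.

Lemma tau_pred : (1 < h)%N -> tau h.-1 = nextI I h.-1.
Proof.
case: Itilde_sigma_h => ->; case: ifP => hI pm h1.
  rewrite (sigmaI_cat_iota_low HI pm); last lia.
  by rewrite (nextI_S HI) ?hI //; lia.
by rewrite (sigmaI_cat_iota_high HI pm) ?ifT //; lia.
Qed.

Lemma tau_high k : (h <= k <= m)%N -> tau k = sigma k.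
Proof.
case: Itilde_sigma_h => -> pm hk.
rewrite (sigmaI_cat_iota_high HI pm); last by case: ifP; lia.
case: eqP => // kp; rewrite sigmaIE ifT // kp /=.
by move: kp; case: ifP => hI kp; rewrite ?hI ?orbT // (_ : h.-2 = 0%N) //; lia.
Qed.

Lemma child_pair_nextI n : (0 < n < m)%N ->
  child_pair n (nextI I n.+1) (nextI I n) (sigmaI I n.+1).
Proof.
move=> nm; rewrite sigmaIE /= (nextI_S HI (_ : n < m)%N); last lia.
rewrite (_ : (n == 0) = false) /=; last lia.
by case: (n \in I); rewrite /child_pair !eqxx ?orbT.
Qed.

(* The path from the root [multi_pre T m m] down to [T j] passes through
   [multi_pre T n (branch n)]; the other child there is [multi_pre T n (sibling n)]. *)
Definition branch n := if (n < h)%N then j else nextI I n.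
Definition sibling n := if (n < h)%N then tau n else sigma n.+1.

Lemma branch_step n : (0 < n < m)%N -> child_pair n (branch n.+1) (branch n) (sibling n).
Proof.
move=> nm; rewrite /branch /sibling; case: (ltngtP n.+1 h) => [n1h|hn1|n1h].
- by rewrite tau_low /child_pair ?eqxx ?orbT //; lia.
- exact: child_pair_nextI.
- have tn : tau n = nextI I n by rewrite (_ : n = h.-1) ?tau_pred //; lia.
  by rewrite child_pairC tn -n1h; apply: child_pair_nextI.
Qed.

Lemma branch_cov c : c \in branch_covs (T j) ->
  rev [seq jlabel (multi_pre T n (sibling n)) | n <- iota 1 m.-1] ++ c
    \in branch_covs (multi_pre T m m).
Proof.
move=> cT; have m0 : (0 < m)%N by lia.
have bm : branch m = m by rewrite /branch ltnNge (_ : h <= m)%N ?(nextI_top HI) //; lia.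
have b1 : branch 1 = j.
  by rewrite /branch; case: ifP => // h1; rewrite (_ : h = 1%N) ?sigmaIE //; lia.
have := @branch_covs_multi_pre T branch sibling m.-1 c.
rewrite prednK // bm b1; apply=> // n nm; apply: branch_step; lia.
Qed.

Definition sibs_below := [seq jlabel (multi_pre T n (tau n)) | n <- iota 1 h.-1].
Definition sibs_above :=
  [seq jlabel (multi_pre T k.-1 (sigma k)) | k <- iota h.+1 (m - h)].

Lemma leq_vDelta_Psi_branch c s :
  c \in branch_covs (T j) -> {subset s <= c ++ sibs_below ++ sibs_above} ->
  (vDelta s <= Psi (multi_pre T m m))%N.
Proof.
move=> cT sc; apply: (leq_Psi (branch_cov cT)) => X /sc.
rewrite !mem_cat mem_rev => /or3P[->|/mapP[n nh ->]|/mapP[k hk ->]]; rewrite ?orbT //.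
  move: nh; rewrite mem_iota => nh; apply/orP; left; apply/mapP; exists n.
    by rewrite mem_iota; lia.
  by rewrite /sibling ifT //; lia.
move: hk; rewrite mem_iota => hk; apply/orP; left; apply/mapP; exists k.-1.
  by rewrite mem_iota; lia.
by rewrite /sibling ifN ?prednK //; lia.
Qed.

Lemma G_upto_tau_low n : (n <= h.-2)%N -> G_upto (fun i => G (tau i)) n = G_upto G n.
Proof.
move=> nh; rewrite /G_upto; congr unionG; apply/eq_in_map => i.
by rewrite mem_iota => ni; rewrite tau_low //; lia.
Qed.

Lemma G_upto_tau_pred :
  G_upto (fun i => G (tau i)) h.-1 = G_upto (fun i => G (sigma i)) h.-1.
Proof.
have [h1|h1] : h = 1%N \/ (1 < h)%N by lia.
  by rewrite h1.
rewrite (G_upto_pred _ (_ : 0 < h.-1)%N) ?tau_pred ?G_upto_tau_low ?G_upto_sigmaI //.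
all: lia.
Qed.

Lemma sibs_below_padded :
  padded fset0 1 h.-1 (fun n => G (tau n)) (fun n => jlabel (multi_pre T n (tau n))).
Proof.
move=> n nh; rewrite subn1 prednK /=; last lia.
rewrite (jlabel_multi_pre TG); [|lia|apply: tau_range; lia].
rewrite fset0U -/(G_upto _ n) (G_upto_pred (fun i => G (tau i))); last lia.
by rewrite G_upto_tau_low ?fsubsetUr //; lia.
Qed.

Lemma vDelta_sibs_below : vDelta sibs_below = vDelta [seq G (tau n) | n <- iota 1 h.-1].
Proof. exact: vDeltaC_pad sibs_below_padded. Qed.

Lemma unionG_sibs_below : unionG sibs_below = G_upto (fun i => G (sigma i)) h.-1.
Proof.
by have := unionG_pad sibs_below_padded; rewrite !fset0U => ->; apply: G_upto_tau_pred.
Qed.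

Lemma sibs_above_padded : padded (G_upto (fun i => G (sigma i)) h) h.+1 (m - h)
  (fun k => G (sigma k)) (fun k => jlabel (multi_pre T k.-1 (sigma k))).
Proof.
move=> k hk; rewrite G_upto_iotaD (_ : h + _ = k)%N /=; last lia.
rewrite (jlabel_multi_pre TG); [|lia|apply: sigmaI_range; lia].
rewrite (G_upto_pred _ (_ : 0 < k)%N) ?G_upto_sigmaI; [|lia|lia].
by rewrite fsubsetUr fsetSU // fsubsetUl.
Qed.

Lemma vDeltaC_sibs_above : vDeltaC (G_upto (fun i => G (sigma i)) h) sibs_above =
  vDeltaC (G_upto (fun i => G (sigma i)) h) [seq G (sigma k) | k <- iota h.+1 (m - h)].
Proof. exact: vDeltaC_pad sibs_above_padded. Qed.

Lemma vDelta_tau :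
  vDelta [seq G (tau k) | k <- iota 1 m] =
  (vDelta [seq G (tau n) | n <- iota 1 h.-1]
   + Delta (ominus (G j) (G_upto (fun i => G (sigma i)) h.-1))
   + vDeltaC (G_upto (fun i => G (sigma i)) h)
       [seq G (sigma k) | k <- iota h.+1 (m - h)])%N.
Proof.
have -> : iota 1 m = iota 1 h.-1 ++ h :: iota h.+1 (m - h).
  rewrite -{1}(subnKC (_ : h.-1 <= m)%N) ?iotaD ?add1n ?prednK; try lia.
  by rewrite (_ : m - h.-1 = (m - h).+1)%N //; lia.
rewrite map_cat /vDelta vDeltaC_cat /= fset0U -/(G_upto _ h.-1) G_upto_tau_pred.
rewrite tau_high ?addnA -?G_upto_pred; [|lia|lia]; congr (_ + _)%N.
by congr vDeltaC; apply/eq_in_map => k; rewrite mem_iota => hk; rewrite tau_high //; lia.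
Qed.

Lemma leq_Psi_shift : (Psi (T j) + vDeltaC (G_upto (fun i => G (sigma i)) h)
    [seq G (sigma k) | k <- iota h.+1 (m - h)] <= Psi (multi_pre T m m))%N.
Proof.
have [c cT [q qc ->]] := Psi_attained (T j).
have cj : unionG c = G j by rewrite (unionG_branch_cov cT) TG // sigmaI_range.
have sub : {subset q ++ c ++ sibs_below ++ sibs_above <= c ++ sibs_below ++ sibs_above}.
  by move=> X; rewrite !mem_cat => /orP[/qc ->|->]; rewrite ?orbT.
apply: leq_trans (leq_vDelta_Psi_branch cT sub).
rewrite /vDelta !vDeltaC_cat fset0U (fsetUidPr _ _ (unionG_subset qc)).
rewrite cj unionG_sibs_below fsetUC -G_upto_pred ?vDeltaC_sibs_above; last lia.
by rewrite leq_add2l addnA leq_addl.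
Qed.

Lemma leq_Psi_tilde (F := G_upto (fun i => G (sigma i)) h.-1) :
  ((Psi (jominus (T j) F))%:Z - (Delta (ominus (G j) F))%:Z
     + (vDelta [seq G (tau k) | k <- iota 1 m])%:Z <= (Psi (multi_pre T m m))%:Z)%R.
Proof.
have [c cT [q qc Psiq]] := Psi_jominus (T j) F.
have cj : unionG c = G j by rewrite (unionG_branch_cov cT) TG // sigmaI_range.
have sub : {subset sibs_below ++ q ++ c ++ sibs_above <= c ++ sibs_below ++ sibs_above}.
  by move=> X; rewrite !mem_cat => /or4P[->|/qc ->|->|->]; rewrite ?orbT.
have PsiM := leq_vDelta_Psi_branch cT sub.
rewrite /vDelta !vDeltaC_cat -/(vDelta sibs_below) vDelta_sibs_below in PsiM.
rewrite fset0U unionG_sibs_below in PsiM.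
rewrite -(fsetUA F) (fsetUidPr _ _ (unionG_subset qc)) cj -G_upto_pred in PsiM; last lia.
rewrite vDeltaC_sibs_above in PsiM; rewrite vDelta_tau; move: Psiq PsiM; rewrite /F; lia.
Qed.

End ShiftedBranch.

Theorem lemma5p4 (m : nat) (T : nat -> jtree) (G : nat -> graph)
    (sigma : nat -> nat) (I : seq nat) (h : nat) :
  (forall j, (1 <= j <= m)%N -> jlabel (T j) = G j) ->
  shift_perm m sigma ->
  valid_I m I ->
  (forall j, (1 <= j <= m)%N -> sigma j = sigmaI I j) ->
  (1 <= h <= m)%N ->
  let TT := multi [seq T k | k <- iota 1 m] in
  [/\ (Psi (T (sigma 1%N)) +
         vDeltaC (G (sigma 1%N)) [seq G (sigma k) | k <- iota 2 m.-1] <= Psi TT)%N,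
      (Psi (T (sigma h)) +
         vDeltaC (unionG [seq G (sigma k) | k <- iota 1 h])
                 [seq G (sigma k) | k <- iota h.+1 (m - h)] <= Psi TT)%N &
      let j := sigma h in
      let F := unionG [seq G (sigma k) | k <- iota 1 h.-1] in
      ((Psi (jominus (T j) F))%:Z - (Delta (ominus (G j) F))%:Z
         + (vDelta [seq G (sigmaI (Itilde I j) k) | k <- iota 1 m])%:Z
       <= (Psi TT)%:Z)%R].
Proof.
move=> TG _ HI sigmaE hm TT.
have map_sigma a n : (0 < a)%N -> (a + n <= m.+1)%N ->
    [seq G (sigma k) | k <- iota a n] = [seq G (sigmaI I k) | k <- iota a n].
  by move=> a0 an; apply/eq_in_map => k; rewrite mem_iota => ak; rewrite sigmaE //; lia.
rewrite /TT multi_pre_top; last lia.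
rewrite (sigmaE 1%N) ?(sigmaE h); try lia.
split.
- have := leq_Psi_shift TG HI (_ : 0 < 1 <= m)%N; rewrite map_sigma ?subn1; try lia.
  by rewrite /G_upto /= fsetU0; apply; lia.
- by rewrite !map_sigma; [apply: leq_Psi_shift|lia..].
- by rewrite /= map_sigma; [apply: leq_Psi_tilde|lia..].
Qed.
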